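(* Let $0\le\lambda<1$, let $Y_1,Y_2,\ldots$ be i.i.d. Poisson random variables with mean $\lambda$, and define $X=0$ if $Y_1=0$ and otherwise $X=\min\{z\ge1:\sum_{i=1}^{z}Y_i\le z\}$. Let $W=\max(X,1)$. Then $$\Pr(W=w)=\begin{cases}(\lambda+1)e^{-\lambda}, & w=1,\\ \dfrac{(w-1)^{w-2}}{w\,(w-2)!}\lambda^{w}e^{-w\lambda}, & w\ge2,\end{cases}$$ and, for $\lambda>0$, $$\mathbb{E}[W]=\frac{1}{\lambda}\mathbb{E}[X]=\frac{e^{-\lambda}}{1-\lambda}.$$
   Context: $\mathbb{E}[X]=\frac{\lambda}{1-\lambda}e^{-\lambda}$ is the mean of $X$; $W$ is the inter-renewal time of a modified renewal process in which every inter-decoding time of $0$ slots is replaced by $1$ slot. *)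

From Stdlib Require Import Reals List Arith Bool.
Import ListNotations.
Open Scope R_scope.

Definition poisson (lam : R) (k : nat) : R := exp (- lam) * lam ^ k / INR (fact k).

Fixpoint tuples (n m : nat) : list (list nat) :=
  match n with
  | O => [[]]
  | S n' => flat_map (fun a => map (cons a) (tuples n' m)) (seq 0 m)
  end.

Definition prefix_sum (k : nat) (ys : list nat) : nat := fold_right plus 0%nat (firstn k ys).

(* The event {X = z} for z >= 1, which is determined by (Y_1,...,Y_z):
   Y_1 <> 0, Y_1+...+Y_z <= z, and Y_1+...+Y_k > k for all 1 <= k < z. *)
Definition X_event (z : nat) (ys : list nat) : bool :=
  (1 <=? z)%nat && negb (prefix_sum 1 ys =? 0)%nat && (prefix_sum z ys <=? z)%nat
  && forallb (fun k => (k <? prefix_sum k ys)%nat) (seq 1 (z - 1)).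

(* Product-measure probability of a cylinder event on (Y_1,...,Y_z),
   summing over all prefixes with entries <= z (the event forces this). *)
Definition prob_cyl (lam : R) (z : nat) (E : list nat -> bool) : R :=
  fold_right Rplus 0
    (map (fun ys => fold_right Rmult 1 (map (poisson lam) ys))
         (filter E (tuples z (S z)))).

(* Pr(X = z). X = 0 iff Y_1 = 0. *)
Definition PX (lam : R) (z : nat) : R :=
  match z with
  | O => poisson lam 0
  | S _ => prob_cyl lam z (X_event z)
  end.

Definition PW (lam : R) (w : nat) : R :=
  match w with
  | O => 0
  | 1%nat => PX lam 0 + PX lam 1
  | _ => PX lam w
  end.

(* X is the first-passage time to 0 of the walk that starts at 0 and moves by Y_i - 1.
   The hitting-time theorem P(tau_m = n) = (m/n) P(Poisson(n lam) = n - m) for the walk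
   started at m >= 1 follows by induction on n from the first-step decomposition, the
   inductive step being the binomial identity
   sum_a C(L,a) (c + a) N^(L-a) = (c + L/(1+N)) (1+N)^L.  Conditioning on Y_1 = a >= 2
   gives P(X = w), and then w P(X = w) = x * (k^k/k!) x^k with x = lam e^-lam, k = w - 1.
   For the tree function T(x) = sum k^(k-1)/k! x^k and D = x T', Abel's identity gives
   T = D (1 - T); hence T e^-T / x has zero derivative and tends to 1 at 0, so
   T(lam e^-lam) = lam because u e^-u is injective on [0, 1], and
   sum (k^k/k!) x^k = D(x) = T/(1 - T) = lam/(1 - lam). *)

From Stdlib Require Import Reals List Arith Bool Lra Lia.
From Coquelicot Require Import Coquelicot.
Import ListNotations.
Open Scope R_scope.

(** * Binomial sums and Abel's identity *)

Lemma C_succ_mul (L i : nat) :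
  (i <= L)%nat -> Binomial.C (S L) (S i) * INR (S i) = INR (S L) * Binomial.C L i.
Proof.
  intros Hi. unfold Binomial.C. replace (S L - S i)%nat with (L - i)%nat by lia.
  rewrite !fact_simpl, !mult_INR.
  assert (INR (fact i) <> 0) by apply INR_fact_neq_0.
  assert (INR (fact (L - i)) <> 0) by apply INR_fact_neq_0.
  assert (INR (S i) <> 0) by (apply not_0_INR; lia).
  field; auto.
Qed.

Lemma C_mul_sub (n k : nat) :
  (k <= n)%nat -> Binomial.C (S n) k * INR (S n - k) = INR (S n) * Binomial.C n k.
Proof.
  intros Hk. unfold Binomial.C. replace (S n - k)%nat with (S (n - k)) by lia.
  rewrite !fact_simpl, !mult_INR.
  assert (INR (fact k) <> 0) by apply INR_fact_neq_0.
  assert (INR (fact (n - k)) <> 0) by apply INR_fact_neq_0.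
  assert (INR (S (n - k)) <> 0) by (apply not_0_INR; lia).
  field; auto.
Qed.

Lemma sum_binomial_pow (N : R) (L : nat) :
  sum_f_R0 (fun a => Binomial.C L a * N ^ (L - a)) L = (1 + N) ^ L.
Proof. rewrite binomial. apply sum_eq. intros a _. rewrite pow1. ring. Qed.

Lemma sum_binomial_mul_pow (N : R) (L : nat) :
  sum_f_R0 (fun a => Binomial.C L a * INR a * N ^ (L - a)) L = INR L * (1 + N) ^ (L - 1).
Proof.
  destruct L as [|L]; [simpl; ring|].
  rewrite decomp_sum by lia. simpl INR at 2. rewrite Rmult_0_r, Rmult_0_l, Rplus_0_l.
  replace (S L - 1)%nat with L by lia. rewrite <- sum_binomial_pow, scal_sum.
  apply sum_eq. intros a Ha. replace (S L - S a)%nat with (L - a)%nat by lia.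
  rewrite C_succ_mul by lia. ring.
Qed.

Lemma sum_binomial_affine (c N : R) (L : nat) :
  1 + N <> 0 ->
  sum_f_R0 (fun a => Binomial.C L a * (c + INR a) * N ^ (L - a)) L
  = (c + INR L / (1 + N)) * (1 + N) ^ L.
Proof.
  intros HN.
  rewrite (sum_eq _ (fun a => Binomial.C L a * N ^ (L - a) * c
                              + Binomial.C L a * INR a * N ^ (L - a))) by (intros; ring).
  rewrite sum_plus, <- scal_sum, sum_binomial_pow, sum_binomial_mul_pow.
  destruct L as [|L]; [simpl; field; exact HN|].
  replace (S L - 1)%nat with L by lia. simpl pow. field. exact HN.
Qed.

Lemma alternating_binomial_pow_zero (j n : nat) (c : R) :
  (j < n)%nat ->
  sum_f_R0 (fun i => Binomial.C n i * (-1) ^ (n - i) * (INR i + c) ^ j) n = 0.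
Proof.
  revert n c. induction j as [|j IH]; intros n c Hjn.
  - transitivity ((1 + -1) ^ n).
    + rewrite binomial. apply sum_eq. intros i _. rewrite pow1. simpl. ring.
    + replace (1 + -1) with 0 by ring. apply pow_i. lia.
  - destruct n as [|n]; [lia|].
    (* (i + c)^(j+1) = i (i + c)^j + c (i + c)^j, and i C(n+1, i) = (n+1) C(n, i-1) *)
    rewrite (sum_eq _ (fun i => Binomial.C (S n) i * (-1) ^ (S n - i) * INR i * (INR i + c) ^ j
                      + Binomial.C (S n) i * (-1) ^ (S n - i) * (INR i + c) ^ j * c))
      by (intros; simpl; ring).
    rewrite sum_plus, <- scal_sum, IH, decomp_sum by lia.
    rewrite (sum_eq _ (fun i =>
               Binomial.C n i * (-1) ^ (n - i) * (INR i + (c + 1)) ^ j * INR (S n))).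
    + rewrite <- scal_sum, IH by lia. simpl INR. ring.
    + intros i Hi. replace (S n - S i)%nat with (n - i)%nat by lia.
      transitivity (Binomial.C (S n) (S i) * INR (S i) * ((-1) ^ (n - i) * (INR (S i) + c) ^ j));
        [ring|].
      rewrite C_succ_mul, (S_INR i) by lia.
      replace (INR i + 1 + c) with (INR i + (c + 1)) by ring. ring.
Qed.

Lemma derivative_zero_eq (f : R -> R) (a b : R) :
  (forall x, Rmin a b <= x <= Rmax a b -> derivable_pt_lim f x 0) -> f a = f b.
Proof.
  intros Hd. destruct (Rtotal_order a b) as [Hab|[->|Hab]]; [|reflexivity|].
  - destruct (MVT_cor2 f (fun _ => 0) a b Hab) as [c [Hc _]].
    + intros x Hx. apply Hd. rewrite Rmin_left, Rmax_right by lra. lra.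
    + lra.
  - destruct (MVT_cor2 f (fun _ => 0) b a Hab) as [c [Hc _]].
    + intros x Hx. apply Hd. rewrite Rmin_right, Rmax_left by lra. lra.
    + lra.
Qed.

Definition cayley (k : nat) : R := match k with O => 0 | S j => INR k ^ j end.

Definition abel_sum (n : nat) (y : R) : R :=
  sum_f_R0 (fun k => Binomial.C n k * cayley k * (y + INR (n - k)) ^ (n - k)) n.

Lemma abel_sum_derive (n : nat) (y : R) :
  is_derive (abel_sum (S n)) y (INR (S n) * abel_sum n (y + 1)).
Proof.
  set (g k t := Binomial.C (S n) k * cayley k * (t + INR (S n - k)) ^ (S n - k)).
  apply (is_derive_ext (fun t => sum_n (fun k => g k t) (S n))).
  { intros t. apply sum_n_Reals. }
  replace (INR (S n) * abel_sum n (y + 1)) with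
    (sum_n (fun k => Binomial.C (S n) k * cayley k
                     * (INR (S n - k) * (y + INR (S n - k)) ^ (S n - k - 1))) (S n)).
  - apply (is_derive_sum_n g). intros k _. unfold g.
    generalize (S n - k)%nat; intros p. auto_derive; [easy|].
    replace (Init.Nat.pred p) with (p - 1)%nat by lia. ring.
  - rewrite sum_n_Reals, tech5, Nat.sub_diag, INR_0, Rmult_0_l, Rmult_0_r, Rplus_0_r.
    unfold abel_sum. rewrite scal_sum. apply sum_eq. intros k Hk.
    replace (S n - k - 1)%nat with (n - k)%nat by lia.
    replace (y + INR (S n - k)) with (y + 1 + INR (n - k))
      by (replace (S n - k)%nat with (S (n - k)) by lia; rewrite S_INR; ring).
    transitivity (Binomial.C (S n) k * INR (S n - k)
                  * (cayley k * (y + 1 + INR (n - k)) ^ (n - k))); [ring|].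
    rewrite C_mul_sub by lia. ring.
Qed.

Lemma abel_sum_at_root (n : nat) : (1 <= n)%nat -> abel_sum (S n) (- INR (S n)) = 0.
Proof.
  intros Hn. rewrite <- (alternating_binomial_pow_zero n (S n) 0) by lia.
  apply sum_eq. intros k Hk. rewrite Rplus_0_r.
  destruct k as [|k]; [rewrite INR_0, pow_i by lia; simpl; ring|].
  replace (- INR (S n) + INR (S n - S k)) with (-1 * INR (S k)) by (rewrite minus_INR by lia; ring).
  replace (INR (S k) ^ n) with (INR (S k) ^ k * INR (S k) ^ (S n - S k))
    by (rewrite <- pow_add; f_equal; lia).
  unfold cayley. rewrite Rpow_mult_distr. ring.
Qed.

Lemma abel_identity (n : nat) (y : R) :
  (1 <= n)%nat -> abel_sum n y = INR n * (y + INR n) ^ (n - 1).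
Proof.
  revert y. induction n as [|n IH]; intros y Hn; [lia|].
  destruct n as [|n].
  - unfold abel_sum, Binomial.C. simpl. field.
  - set (f t := abel_sum (S (S n)) t - INR (S (S n)) * (t + INR (S (S n))) ^ (S n)).
    assert (Hf : f y = f (- INR (S (S n)))).
    { apply derivative_zero_eq. intros t _. apply is_derive_Reals.
      replace 0 with (INR (S (S n)) * abel_sum (S n) (t + 1)
                      - INR (S (S n)) * (INR (S n) * (t + INR (S (S n))) ^ n)).
      - unfold f. apply (is_derive_minus (abel_sum (S (S n)))); [apply abel_sum_derive|].
        auto_derive; [easy|]. simpl. ring.
      - rewrite IH by lia. replace (S n - 1)%nat with n by lia.
        rewrite (S_INR (S n)). replace (t + 1 + INR (S n)) with (t + (INR (S n) + 1)) by ring.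
        ring. }
    assert (Hroot : f (- INR (S (S n))) = 0).
    { unfold f. rewrite abel_sum_at_root by lia.
      replace (- INR (S (S n)) + INR (S (S n))) with 0 by ring. rewrite pow_i by lia. ring. }
    unfold f in Hf, Hroot. replace (S (S n) - 1)%nat with (S n) by lia. lra.
Qed.

(** * First-passage probabilities *)

Local Notation lsum f l := (fold_right Rplus 0 (map f l)).

Lemma lsum_app {A : Type} (f : A -> R) (l1 l2 : list A) :
  lsum f (l1 ++ l2) = lsum f l1 + lsum f l2.
Proof. induction l1 as [|a l1 IH]; simpl; [ring|]. rewrite IH. ring. Qed.

Lemma lsum_filter {A : Type} (f : A -> R) (E : A -> bool) (l : list A) :
  lsum f (filter E l) = lsum (fun y => if E y then f y else 0) l.
Proof. induction l as [|a l IH]; simpl; auto. destruct (E a); simpl; rewrite IH; ring. Qed.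

Lemma lsum_ext_in {A : Type} (f g : A -> R) (l : list A) :
  (forall y, In y l -> f y = g y) -> lsum f l = lsum g l.
Proof. intros H. f_equal. apply map_ext_in. exact H. Qed.

Lemma lsum_scal {A : Type} (c : R) (f : A -> R) (l : list A) :
  lsum (fun y => c * f y) l = c * lsum f l.
Proof. induction l as [|a l IH]; simpl; [ring|]. rewrite IH. ring. Qed.

Lemma lsum_zero {A : Type} (l : list A) : lsum (fun _ => 0) l = 0.
Proof. induction l as [|a l IH]; simpl; [|rewrite IH]; ring. Qed.

Lemma lsum_seq (g : nat -> R) (K : nat) : lsum g (seq 0 (S K)) = sum_f_R0 g K.
Proof.
  induction K as [|K IH]; [simpl; ring|].
  rewrite seq_S, lsum_app, IH. simpl. ring.
Qed.

Lemma lsum_tuples_succ (f : list nat -> R) (n K : nat) :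
  lsum f (tuples (S n) (S K))
  = sum_f_R0 (fun a => lsum (fun ys => f (a :: ys)) (tuples n (S K))) K.
Proof.
  rewrite <- lsum_seq.
  change (tuples (S n) (S K))
    with (flat_map (fun a => map (cons a) (tuples n (S K))) (seq 0 (S K))).
  generalize (seq 0 (S K)). intros l.
  induction l as [|a l IH]; simpl; auto.
  rewrite lsum_app, IH, map_map. reflexivity.
Qed.

Lemma tuples_length (n M : nat) (ys : list nat) : In ys (tuples n M) -> length ys = n.
Proof.
  revert ys. induction n as [|n IH]; simpl; intros ys H.
  - destruct H as [<-|[]]. reflexivity.
  - apply in_flat_map in H. destruct H as [a [_ H]]. apply in_map_iff in H.
    destruct H as [ys' [<- H]]. simpl. f_equal. auto.
Qed.

Lemma sum_f_R0_zero_tail (g : nat -> R) (L K : nat) :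
  (L <= K)%nat -> (forall a, (L < a <= K)%nat -> g a = 0) -> sum_f_R0 g K = sum_f_R0 g L.
Proof.
  intros HLK H. induction K as [|K IH].
  - replace L with 0%nat by lia. reflexivity.
  - destruct (Nat.eq_dec L (S K)) as [->|HL]; [reflexivity|].
    simpl. rewrite IH, H by (try lia; intros; apply H; lia). ring.
Qed.

Fixpoint first_passage (m : nat) (ys : list nat) : bool :=
  match ys with
  | [] => true
  | [y] => (m + y <=? 1)%nat
  | y :: ys' => (2 <=? m + y)%nat && first_passage (m + y - 1) ys'
  end.

Lemma first_passage_cons (m a : nat) (ys : list nat) :
  ys <> [] -> first_passage m (a :: ys) = ((2 <=? m + a)%nat && first_passage (m + a - 1) ys).
Proof. destruct ys; [congruence|reflexivity]. Qed.

Lemma prefix_sum_cons (k y : nat) (l : list nat) :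
  prefix_sum (S k) (y :: l) = (y + prefix_sum k l)%nat.
Proof. reflexivity. Qed.

Lemma prefix_sum_one (y : nat) (l : list nat) : prefix_sum 1 (y :: l) = y.
Proof. unfold prefix_sum. simpl. lia. Qed.

Lemma first_passage_spec (m : nat) (ys : list nat) :
  ys <> [] ->
  first_passage m ys = true <->
  (m + prefix_sum (length ys) ys <= length ys)%nat /\
  (forall k, (1 <= k < length ys)%nat -> (k < m + prefix_sum k ys)%nat).
Proof.
  revert m. induction ys as [|y ys IH]; intros m Hne; [congruence|].
  destruct ys as [|y2 r].
  - unfold prefix_sum. simpl. rewrite Nat.leb_le.
    split; [intros H; split; [lia|intros; lia]|intros [H _]; lia].
  - rewrite first_passage_cons, andb_true_iff, Nat.leb_le, IH by congruence.
    set (ys := y2 :: r). change (length (y :: ys)) with (S (length ys)).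
    rewrite prefix_sum_cons. assert (Hl : (1 <= length ys)%nat) by (simpl; lia).
    split.
    + intros [H1 [H2 H3]]. split; [lia|]. intros [|[|k]] Hk; [lia| |].
      * rewrite prefix_sum_one. lia.
      * rewrite prefix_sum_cons. specialize (H3 (S k)). lia.
    + intros [H2 H3]. assert (H1 := H3 1%nat ltac:(lia)). rewrite prefix_sum_one in H1.
      split; [lia|]. split; [lia|]. intros k Hk. specialize (H3 (S k) ltac:(lia)).
      rewrite prefix_sum_cons in H3. lia.
Qed.

Lemma X_event_spec (z : nat) (ys : list nat) :
  X_event z ys = true <->
  (1 <= z)%nat /\ prefix_sum 1 ys <> 0%nat /\ (prefix_sum z ys <= z)%nat /\
  (forall k, (1 <= k < z)%nat -> (k < prefix_sum k ys)%nat).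
Proof.
  unfold X_event.
  rewrite !andb_true_iff, negb_true_iff, !Nat.leb_le, Nat.eqb_neq, forallb_forall.
  split.
  - intros [[[H1 H2] H3] H4]. repeat split; auto.
    intros k Hk. apply Nat.ltb_lt, H4, in_seq. lia.
  - intros [H1 [H2 [H3 H4]]]. repeat split; auto.
    intros k Hk. apply in_seq in Hk. apply Nat.ltb_lt, H4. lia.
Qed.

Lemma X_event_first_passage (z : nat) (ys : list nat) :
  (2 <= z)%nat -> length ys = z -> X_event z ys = first_passage 0 ys.
Proof.
  intros Hz Hl. assert (Hne : ys <> []) by (intros ->; simpl in Hl; lia).
  apply eq_true_iff_eq. rewrite X_event_spec, first_passage_spec, Hl by exact Hne.
  split.
  - intros [_ [_ [H1 H2]]]. split; [exact H1|exact H2].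
  - intros [H1 H2]. assert (H3 := H2 1%nat ltac:(lia)). repeat split; auto; lia.
Qed.

Definition tuple_weight (lam : R) (ys : list nat) : R :=
  fold_right Rmult 1 (map (poisson lam) ys).

(* Entries are truncated to [0..K]; this loses nothing when [n <= K], since a first
   passage at step [n] forces every entry to be at most [n]. *)
Definition walk_prob (lam : R) (K m n : nat) : R :=
  lsum (fun ys => if first_passage m ys then tuple_weight lam ys else 0) (tuples n (S K)).

Lemma walk_prob_one (lam : R) (K m : nat) :
  walk_prob lam K m 1 = sum_f_R0 (fun a => if (m + a <=? 1)%nat then poisson lam a else 0) K.
Proof.
  unfold walk_prob. rewrite lsum_tuples_succ. apply sum_eq. intros a _.
  unfold tuple_weight. simpl. destruct (m + a <=? 1)%nat; ring.
Qed.

Lemma walk_prob_succ (lam : R) (K m n : nat) :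
  (1 <= n)%nat ->
  walk_prob lam K m (S n)
  = sum_f_R0 (fun a => if (2 <=? m + a)%nat
                       then poisson lam a * walk_prob lam K (m + a - 1) n else 0) K.
Proof.
  intros Hn. unfold walk_prob. rewrite lsum_tuples_succ. apply sum_eq. intros a _.
  destruct (2 <=? m + a)%nat eqn:E.
  - rewrite <- lsum_scal. apply lsum_ext_in. intros ys Hys.
    assert (Hl := tuples_length _ _ _ Hys).
    rewrite first_passage_cons, E by (intros ->; simpl in Hl; lia). unfold tuple_weight. simpl.
    destruct (first_passage (m + a - 1) ys); ring.
  - transitivity (lsum (fun _ : list nat => 0) (tuples n (S K))); [|apply lsum_zero].
    apply lsum_ext_in. intros ys Hys. assert (Hl := tuples_length _ _ _ Hys).
    rewrite first_passage_cons, E by (intros ->; simpl in Hl; lia). simpl. ring.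
Qed.

Definition hitting_prob (lam : R) (m n : nat) : R :=
  if (m <=? n)%nat then INR m / INR n * poisson (INR n * lam) (n - m) else 0.

Lemma first_step_sum (lam c : R) (n L : nat) :
  (1 <= n)%nat ->
  sum_f_R0 (fun a => poisson lam a * ((c + INR a) / INR n * poisson (INR n * lam) (L - a))) L
  = (c + INR L / INR (S n)) / INR n * poisson (INR (S n) * lam) L.
Proof.
  intros Hn. assert (HnR : INR n <> 0) by (apply not_0_INR; lia).
  assert (HL := INR_fact_neq_0 L).
  transitivity (sum_f_R0 (fun a => Binomial.C L a * (c + INR a) * INR n ^ (L - a)) L
                * (exp (- (INR (S n) * lam)) * lam ^ L / (INR n * INR (fact L)))).
  - rewrite (Rmult_comm (sum_f_R0 _ L)), scal_sum. apply sum_eq. intros a Ha.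
    assert (Ha' := INR_fact_neq_0 a). assert (HLa := INR_fact_neq_0 (L - a)).
    replace (lam ^ L) with (lam ^ a * lam ^ (L - a)) by (rewrite <- pow_add; f_equal; lia).
    replace (exp (- (INR (S n) * lam))) with (exp (- lam) * exp (- (INR n * lam)))
      by (rewrite <- exp_plus, S_INR; f_equal; ring).
    unfold poisson, Binomial.C. rewrite Rpow_mult_distr. field. auto.
  - rewrite sum_binomial_affine; replace (1 + INR n) with (INR (S n)) by (rewrite S_INR; ring).
    + assert (INR (S n) <> 0) by (apply not_0_INR; lia).
      unfold poisson. rewrite Rpow_mult_distr. field. auto.
    + apply not_0_INR. lia.
Qed.

Lemma hitting_prob_first_step (lam : R) (m n K : nat) :
  (1 <= m)%nat -> (1 <= n)%nat -> (n < K)%nat ->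
  sum_f_R0 (fun a => if (2 <=? m + a)%nat
                     then poisson lam a * hitting_prob lam (m + a - 1) n else 0) K
  = hitting_prob lam m (S n).
Proof.
  intros Hm Hn HK. unfold hitting_prob at 2. destruct (m <=? S n)%nat eqn:Emn.
  - apply Nat.leb_le in Emn.
    rewrite (sum_f_R0_zero_tail _ (S n - m)); try lia.
    2:{ intros a Ha. destruct (2 <=? m + a)%nat; [|reflexivity]. unfold hitting_prob.
        replace (m + a - 1 <=? n)%nat with false by (symmetry; apply Nat.leb_gt; lia). ring. }
    rewrite (sum_eq _ (fun a => poisson lam a * ((INR m - 1 + INR a) / INR n
                               * poisson (INR n * lam) (S n - m - a)))).
    + rewrite first_step_sum, minus_INR by lia.
      assert (INR (S n) <> 0) by (apply not_0_INR; lia).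
      assert (INR n <> 0) by (apply not_0_INR; lia).
      rewrite (S_INR n). field. rewrite <- S_INR. auto.
    + intros a Ha. destruct (2 <=? m + a)%nat eqn:E.
      * apply Nat.leb_le in E. unfold hitting_prob.
        replace (m + a - 1 <=? n)%nat with true by (symmetry; apply Nat.leb_le; lia).
        rewrite minus_INR, plus_INR by lia.
        replace (n - (m + a - 1))%nat with (S n - m - a)%nat by lia.
        change (INR 1) with 1. unfold Rdiv. ring.
      * apply Nat.leb_gt in E. replace m with 1%nat by lia. replace a with 0%nat by lia.
        simpl. unfold Rdiv. ring.
  - apply Nat.leb_gt in Emn. apply sum_eq_R0. intros a Ha.
    destruct (2 <=? m + a)%nat; [|reflexivity]. unfold hitting_prob.
    replace (m + a - 1 <=? n)%nat with false by (symmetry; apply Nat.leb_gt; lia). ring.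
Qed.

Theorem hitting_time_theorem (lam : R) (n : nat) :
  (1 <= n)%nat -> forall m K, (1 <= m)%nat -> (n <= K)%nat ->
  walk_prob lam K m n = hitting_prob lam m n.
Proof.
  induction n as [|n IH]; intros Hn m K Hm HK; [lia|].
  destruct n as [|n].
  - rewrite walk_prob_one, (sum_f_R0_zero_tail _ 0); [|lia|].
    2:{ intros a Ha. destruct (m + a <=? 1)%nat eqn:E; [apply Nat.leb_le in E; lia|easy]. }
    unfold hitting_prob. destruct m as [|[|m]]; [lia| |reflexivity].
    unfold poisson. simpl. replace (1 * lam) with lam by ring. field.
  - rewrite walk_prob_succ, <- (hitting_prob_first_step lam m (S n) K) by lia.
    apply sum_eq. intros a _. destruct (2 <=? m + a)%nat eqn:E; [|reflexivity].
    apply Nat.leb_le in E. rewrite IH by lia. reflexivity.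
Qed.

Lemma PX_walk_prob (lam : R) (z : nat) : (2 <= z)%nat -> PX lam z = walk_prob lam z 0 z.
Proof.
  intros Hz. destruct z as [|z]; [lia|].
  change (PX lam (S z)) with (prob_cyl lam (S z) (X_event (S z))).
  unfold prob_cyl, walk_prob. rewrite lsum_filter. apply lsum_ext_in. intros ys Hys.
  rewrite X_event_first_passage by (try apply (tuples_length _ _ _ Hys); lia). reflexivity.
Qed.

Lemma PX_succ (lam : R) (n : nat) :
  (1 <= n)%nat -> PX lam (S n) = exp (- lam) / INR n * poisson (INR n * lam) (S n).
Proof.
  intros Hn. assert (HnR : INR n <> 0) by (apply not_0_INR; lia).
  rewrite PX_walk_prob, walk_prob_succ by lia.
  set (g a := poisson lam a * ((-1 + INR a) / INR n * poisson (INR n * lam) (S n - a))).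
  (* the first step of X is at least 2: only the [a = 0] term of the first-step sum is missing *)
  transitivity (sum_f_R0 g (S n) - g 0%nat).
  - rewrite decomp_sum, (decomp_sum g) by lia. simpl (2 <=? 0 + 0)%nat. simpl Init.Nat.pred.
    rewrite (sum_eq _ (fun b => g (S b))); [ring|].
    intros b Hb. destruct b as [|b].
    + unfold g. simpl. unfold Rdiv. ring.
    + cbv beta. rewrite Nat.add_0_l. replace (S (S b) - 1)%nat with (S b) by lia.
      simpl (2 <=? S (S b))%nat.
      rewrite hitting_time_theorem by lia. unfold g, hitting_prob.
      replace (S b <=? n)%nat with true by (symmetry; apply Nat.leb_le; lia).
      replace (S n - S (S b))%nat with (n - S b)%nat by lia.
      rewrite (S_INR (S b)). unfold Rdiv. ring.
  - unfold g. rewrite first_step_sum by lia.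
    assert (INR (S n) <> 0) by (apply not_0_INR; lia).
    rewrite Nat.sub_0_r. unfold poisson at 2. simpl. field. auto.
Qed.

(** * The tree function *)

Definition tree_coef (n : nat) : R := cayley n / INR (fact n).

Definition pointed_tree_coef (n : nat) : R := INR n * tree_coef n.

Lemma pointed_tree_coef_succ (n : nat) :
  pointed_tree_coef (S n) = INR (S n) ^ S n / INR (fact (S n)).
Proof.
  unfold pointed_tree_coef, tree_coef, cayley.
  change (INR (S n) ^ S n) with (INR (S n) * INR (S n) ^ n). unfold Rdiv. ring.
Qed.

Lemma tree_coef_convolution (n : nat) :
  (1 <= n)%nat ->
  sum_f_R0 (fun k => tree_coef k * pointed_tree_coef (n - k)) n = (INR n - 1) * tree_coef n.
Proof.
  intros Hn. assert (Habel := abel_identity n 0 Hn). unfold abel_sum in Habel.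
  assert (Hfn := INR_fact_neq_0 n).
  (* [j^j / j!] is [pointed_tree_coef j] except at [j = 0], where [0^0 = 1] *)
  rewrite (sum_eq _ (fun k => (tree_coef k * pointed_tree_coef (n - k)
                               + (if (n - k =? 0)%nat then tree_coef k else 0)) * INR (fact n)))
    in Habel.
  2:{ intros k Hk. rewrite Rplus_0_l. unfold Binomial.C.
      assert (INR (fact k) <> 0) by apply INR_fact_neq_0.
      assert (INR (fact (n - k)) <> 0) by apply INR_fact_neq_0.
      destruct (n - k)%nat as [|j]; simpl Nat.eqb.
      - unfold pointed_tree_coef, tree_coef. simpl. field. auto.
      - rewrite pointed_tree_coef_succ. unfold tree_coef. field. auto. }
  rewrite <- scal_sum, sum_plus in Habel.
  destruct n as [|n]; [lia|].
  rewrite (tech5 (fun k => if (S n - k =? 0)%nat then tree_coef k else 0)) in Habel.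
  rewrite (sum_eq_R0 (fun k => if (S n - k =? 0)%nat then tree_coef k else 0) n),
    Nat.sub_diag in Habel
    by (intros k Hk; replace (S n - k =? 0)%nat with false by (symmetry; apply Nat.eqb_neq; lia);
        reflexivity).
  rewrite Rplus_0_l, Nat.sub_succ, Nat.sub_0_r, Rplus_0_l in Habel.
  cbv beta iota delta [Nat.eqb] in Habel.
  replace (INR (S n) ^ n) with (tree_coef (S n) * INR (fact (S n))) in Habel
    by (unfold tree_coef, cayley; field; exact Hfn).
  apply (Rmult_eq_reg_r (INR (fact (S n)))); [|exact Hfn].
  apply (Rplus_eq_reg_r (tree_coef (S n) * INR (fact (S n)))).
  rewrite <- Rmult_plus_distr_r, Rmult_comm, Habel. ring.
Qed.

Lemma exp_pow (x : R) (n : nat) : exp x ^ n = exp (INR n * x).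
Proof.
  induction n as [|n IH]; [simpl; rewrite Rmult_0_l, exp_0; reflexivity|].
  simpl pow. rewrite IH, <- exp_plus, S_INR. f_equal. ring.
Qed.

Lemma pow_div_fact_le_exp (x : R) (n : nat) : 0 <= x -> x ^ n / INR (fact n) <= exp x.
Proof.
  intros Hx. eapply Rle_trans; [|apply (exp_ge_taylor x n Hx)].
  destruct n as [|n]; [simpl; lra|]. rewrite tech5.
  assert (0 <= sum_f_R0 (fun k => x ^ k / INR (fact k)) n); [|lra].
  apply cond_pos_sum. intros k. apply Rmult_le_pos; [apply pow_le; exact Hx|].
  left. apply Rinv_0_lt_compat, INR_fact_lt_0.
Qed.

Lemma tree_coef_nonneg (n : nat) : 0 <= tree_coef n.
Proof.
  unfold tree_coef. apply Rmult_le_pos; [|left; apply Rinv_0_lt_compat, INR_fact_lt_0].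
  destruct n; [simpl; lra|]. apply pow_le, pos_INR.
Qed.

Lemma tree_coef_le_pointed (n : nat) : tree_coef n <= pointed_tree_coef n.
Proof.
  unfold pointed_tree_coef. destruct n as [|n]; [unfold tree_coef; simpl; lra|].
  rewrite <- (Rmult_1_l (tree_coef (S n))) at 1.
  apply Rmult_le_compat_r; [apply tree_coef_nonneg|].
  rewrite S_INR. assert (H := pos_INR n). lra.
Qed.

Lemma pointed_tree_coef_le_exp (n : nat) : pointed_tree_coef n <= exp (INR n).
Proof.
  destruct n as [|n]; [unfold pointed_tree_coef; simpl; rewrite Rmult_0_l; left; apply exp_pos|].
  rewrite pointed_tree_coef_succ. apply pow_div_fact_le_exp, pos_INR.
Qed.

Lemma CV_radius_ge_exp_neg1 (a : nat -> R) :
  (forall n, 0 <= a n <= exp (INR n)) -> Rbar_le (exp (-1)) (CV_radius a).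
Proof.
  intros Ha. apply (proj1 (CV_radius_bounded a)). exists 1. intros n.
  rewrite Rabs_pos_eq by (apply Rmult_le_pos; [apply Ha|left; apply pow_lt, exp_pos]).
  rewrite exp_pow. replace (INR n * -1) with (- INR n) by ring.
  apply Rle_trans with (exp (INR n) * exp (- INR n)).
  - apply Rmult_le_compat_r; [left; apply exp_pos|apply Ha].
  - rewrite <- exp_plus, Rplus_opp_r, exp_0. lra.
Qed.

Lemma tree_coef_radius (x : R) : Rabs x < exp (-1) -> Rbar_lt (Rabs x) (CV_radius tree_coef).
Proof.
  intros Hx. apply (Rbar_lt_le_trans _ (exp (-1))); [exact Hx|]. apply CV_radius_ge_exp_neg1.
  intros n.
  split; [apply tree_coef_nonneg|].
  eapply Rle_trans; [apply tree_coef_le_pointed|apply pointed_tree_coef_le_exp].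
Qed.

Lemma pointed_tree_coef_radius (x : R) :
  Rabs x < exp (-1) -> Rbar_lt (Rabs x) (CV_radius pointed_tree_coef).
Proof.
  intros Hx. apply (Rbar_lt_le_trans _ (exp (-1))); [exact Hx|]. apply CV_radius_ge_exp_neg1.
  intros n.
  split; [|apply pointed_tree_coef_le_exp].
  eapply Rle_trans; [apply tree_coef_nonneg|apply tree_coef_le_pointed].
Qed.

Definition tree_fun (x : R) : R := PSeries tree_coef x.

Definition pointed_tree_fun (x : R) : R := PSeries pointed_tree_coef x.

Lemma pointed_tree_fun_derive (x : R) :
  pointed_tree_fun x = x * PSeries (PS_derive tree_coef) x.
Proof.
  unfold pointed_tree_fun.
  rewrite PSeries_decr_1_aux by (unfold pointed_tree_coef; simpl; ring).
  reflexivity.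
Qed.

Lemma tree_fun_is_derive (x : R) :
  Rabs x < exp (-1) -> is_derive tree_fun x (PSeries (PS_derive tree_coef) x).
Proof. intros Hx. apply is_derive_PSeries, tree_coef_radius, Hx. Qed.

Lemma tree_fun_pointed (x : R) :
  Rabs x < exp (-1) -> tree_fun x = pointed_tree_fun x * (1 - tree_fun x).
Proof.
  intros Hx. assert (HT := tree_coef_radius x Hx). assert (HD := pointed_tree_coef_radius x Hx).
  replace (pointed_tree_fun x * (1 - tree_fun x))
    with (pointed_tree_fun x - tree_fun x * pointed_tree_fun x) by ring.
  unfold tree_fun, pointed_tree_fun. rewrite <- PSeries_mult, <- PSeries_minus by
    (first [apply ex_pseries_mult | apply CV_radius_inside | idtac]; assumption).
  apply PSeries_ext. intros n. unfold PS_minus, PS_mult, plus, opp. simpl.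
  destruct n as [|n].
  - unfold pointed_tree_coef, tree_coef. simpl. field.
  - rewrite tree_coef_convolution by lia. unfold pointed_tree_coef. ring.
Qed.

Lemma PSeries_nonneg (a : nat -> R) (x : R) :
  (forall n, 0 <= a n) -> 0 <= x -> Rbar_lt (Rabs x) (CV_radius a) -> 0 <= PSeries a x.
Proof.
  intros Ha Hx Hr. rewrite <- (PSeries_const_0 x). apply Series_le.
  - intros n. rewrite Rmult_0_l. split; [lra|].
    apply Rmult_le_pos; [apply Ha|apply pow_le, Hx].
  - eapply ex_series_ext; [|exact (CV_radius_inside a x Hr)]. intros n.
    unfold scal; simpl; unfold mult; simpl. rewrite pow_n_pow. ring.
Qed.

Lemma PSeries_ge_arg (a : nat -> R) (x : R) :
  a 0%nat = 0 -> a 1%nat = 1 -> (forall n, 0 <= a n) -> 0 <= x ->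
  Rbar_lt (Rabs x) (CV_radius a) -> x <= PSeries a x.
Proof.
  intros Ha0 Ha1 Ha Hx Hr. rewrite PSeries_decr_1_aux by exact Ha0.
  rewrite PSeries_decr_1 by (apply CV_radius_inside; rewrite CV_radius_decr_1; exact Hr).
  change (PS_decr_1 a 0) with (a 1%nat). rewrite Ha1.
  assert (0 <= PSeries (PS_decr_1 (PS_decr_1 a)) x); [|nra].
  apply PSeries_nonneg; [intros n; apply Ha|exact Hx|now rewrite !CV_radius_decr_1].
Qed.

Lemma tree_fun_ge (x : R) : 0 <= x < exp (-1) -> x <= tree_fun x.
Proof.
  intros Hx. apply PSeries_ge_arg; try (unfold tree_coef; simpl; field); try lra.
  - apply tree_coef_nonneg.
  - apply tree_coef_radius. rewrite Rabs_pos_eq; lra.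
Qed.

Lemma pointed_tree_fun_ge (x : R) : 0 <= x < exp (-1) -> x <= pointed_tree_fun x.
Proof.
  intros Hx. apply PSeries_ge_arg; try (unfold pointed_tree_coef, tree_coef; simpl; field); try lra.
  - intros n. apply (Rle_trans _ _ _ (tree_coef_nonneg n)), tree_coef_le_pointed.
  - apply pointed_tree_coef_radius. rewrite Rabs_pos_eq; lra.
Qed.

Lemma tree_fun_lt_1 (x : R) : 0 < x < exp (-1) -> tree_fun x < 1.
Proof.
  intros Hx. assert (HT := tree_fun_ge x ltac:(lra)).
  assert (HD := pointed_tree_fun_ge x ltac:(lra)).
  assert (E := tree_fun_pointed x ltac:(rewrite Rabs_pos_eq; lra)). nra.
Qed.

Lemma continuity_pt_right_const (g : R -> R) (b c : R) :
  0 < b -> continuity_pt g 0 -> (forall t, 0 < t < b -> g t = c) -> g 0 = c.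
Proof.
  intros Hb Hg Hc. destruct (Req_dec (g 0) c) as [E|Hne]; [exact E|exfalso].
  destruct (Hg (Rabs (g 0 - c))) as [d [Hd Hclose]]; [apply Rabs_pos_lt; lra|].
  set (t := Rmin d b / 2).
  assert (Ht : 0 < t < b /\ t < d)
    by (unfold t; assert (Rmin d b <= d) by apply Rmin_l; assert (Rmin d b <= b) by apply Rmin_r;
        assert (0 < Rmin d b) by (apply Rmin_pos; lra); lra).
  specialize (Hclose t). simpl in Hclose. unfold R_dist in Hclose.
  rewrite Hc, Rminus_0_r, Rabs_pos_eq, <- Rabs_Ropp, Ropp_minus_distr in Hclose by lra.
  assert (Rabs (g 0 - c) < Rabs (g 0 - c)); [|lra].
  apply Hclose. split; [split; [exact I|lra]|lra].
Qed.

Lemma mul_exp_neg_lt (a b : R) : 0 <= a -> a < b -> b <= 1 -> a * exp (- a) < b * exp (- b).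
Proof.
  intros Ha Hab Hb.
  destruct (MVT_cor2 (fun u => u * exp (- u)) (fun u => exp (- u) * (1 - u)) a b Hab)
    as [c [Hc Hcab]].
  - intros c _. apply is_derive_Reals. auto_derive; [easy|]. ring.
  - assert (0 < exp (- c) * (1 - c) * (b - a)); [|lra].
    apply Rmult_lt_0_compat; [apply Rmult_lt_0_compat; [apply exp_pos|]|]; lra.
Qed.

Definition lambert_quotient (t : R) : R := tree_fun t * exp (- tree_fun t) / t.

Lemma lambert_quotient_derive (s : R) :
  0 < s < exp (-1) -> derivable_pt_lim lambert_quotient s 0.
Proof.
  intros Hs. assert (HsR : Rabs s < exp (-1)) by (rewrite Rabs_pos_eq; lra).
  assert (Hder := tree_fun_is_derive s HsR).
  apply is_derive_Reals. unfold lambert_quotient. auto_derive.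
  - repeat split; try (eexists; exact Hder). lra.
  - change (Derive (fun y => tree_fun y) s) with (Derive tree_fun s).
    rewrite (is_derive_unique _ _ _ Hder).
    assert (E := tree_fun_pointed s HsR). rewrite pointed_tree_fun_derive in E.
    set (T := tree_fun s) in *. set (T' := PSeries (PS_derive tree_coef) s) in *.
    assert (Z : s * T' * (1 - T) - T = 0) by lra.
    match goal with |- ?lhs = 0 =>
      replace lhs with (exp (- T) * (s * T' * (1 - T) - T) / (s * s)) by (field; lra) end.
    rewrite Z. field. lra.
Qed.

Lemma lambert_quotient_const (s t : R) :
  0 < s < exp (-1) -> 0 < t < exp (-1) -> lambert_quotient s = lambert_quotient t.
Proof.
  intros Hs Ht. apply derivative_zero_eq. intros u Hu. apply lambert_quotient_derive.
  split; [apply Rlt_le_trans with (Rmin s t); [apply Rmin_pos|]|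
          apply Rle_lt_trans with (Rmax s t); [|apply Rmax_lub_lt]]; lra.
Qed.

Lemma tree_fun_lambert (x : R) : 0 < x < exp (-1) -> tree_fun x * exp (- tree_fun x) = x.
Proof.
  intros Hx.
  (* the quotient extends continuously to 0 as a product of power series *)
  set (ratio t := PSeries (PS_decr_1 tree_coef) t * exp (- tree_fun t)).
  assert (Hratio : forall t, 0 < t < exp (-1) -> ratio t = lambert_quotient x).
  { intros t Ht. rewrite <- (lambert_quotient_const t x Ht Hx).
    unfold ratio, lambert_quotient, tree_fun at 2.
    rewrite (PSeries_decr_1_aux tree_coef t) by (unfold tree_coef, Rdiv; simpl; ring).
    field. lra. }
  assert (H0R : Rbar_lt (Rabs 0) (CV_radius tree_coef))
    by (apply tree_coef_radius; rewrite Rabs_R0; apply exp_pos).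
  assert (Hcont : continuity_pt ratio 0).
  { apply continuity_pt_mult.
    - apply PSeries_continuity. rewrite CV_radius_decr_1. exact H0R.
    - apply (continuity_pt_comp (fun t => - tree_fun t) exp).
      + apply continuity_pt_opp, PSeries_continuity, H0R.
      + apply derivable_continuous_pt, derivable_pt_exp. }
  assert (Hratio0 : ratio 0 = 1).
  { unfold ratio, tree_fun. rewrite !PSeries_0. unfold PS_decr_1, tree_coef. simpl.
    replace (- (0 / 1)) with 0 by field. rewrite exp_0. field. }
  assert (Hx1 : lambert_quotient x = 1)
    by (rewrite <- Hratio0; symmetry; apply (continuity_pt_right_const ratio (exp (-1)));
        [apply exp_pos|exact Hcont|exact Hratio]).
  unfold lambert_quotient in Hx1. apply (Rmult_eq_reg_r (/ x)); [|apply Rinv_neq_0_compat; lra].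
  rewrite Rinv_r by lra. exact Hx1.
Qed.

Lemma lambert_arg_range (lam : R) : 0 < lam < 1 -> 0 < lam * exp (- lam) < exp (-1).
Proof.
  intros Hlam. split; [apply Rmult_lt_0_compat; [lra|apply exp_pos]|].
  rewrite <- (Rmult_1_l (exp (-1))). apply mul_exp_neg_lt; lra.
Qed.

Lemma tree_fun_at (lam : R) : 0 < lam < 1 -> tree_fun (lam * exp (- lam)) = lam.
Proof.
  intros Hlam. assert (Hx := lambert_arg_range lam Hlam).
  set (x := lam * exp (- lam)) in *.
  assert (HT := tree_fun_lambert x Hx). assert (HT0 := tree_fun_ge x ltac:(lra)).
  assert (HT1 := tree_fun_lt_1 x Hx).
  destruct (Rtotal_order (tree_fun x) lam) as [Hlt|[Heq|Hgt]]; [exfalso| exact Heq|exfalso].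
  - assert (H := mul_exp_neg_lt (tree_fun x) lam ltac:(lra) Hlt ltac:(lra)). unfold x in *. lra.
  - assert (H := mul_exp_neg_lt lam (tree_fun x) ltac:(lra) Hgt ltac:(lra)). unfold x in *. lra.
Qed.

Lemma is_series_pointed_tree (lam : R) :
  0 < lam < 1 ->
  is_series (fun k => pointed_tree_coef k * (lam * exp (- lam)) ^ k) (lam / (1 - lam)).
Proof.
  intros Hlam. assert (Hx0 := lambert_arg_range lam Hlam).
  set (x := lam * exp (- lam)) in *.
  assert (Hx : Rabs x < exp (-1)) by (rewrite Rabs_pos_eq; lra).
  replace (lam / (1 - lam)) with (pointed_tree_fun x).
  - eapply is_series_ext; [|apply PSeries_correct, CV_radius_inside, pointed_tree_coef_radius, Hx].
    intros n. unfold scal; simpl; unfold mult; simpl. rewrite pow_n_pow. ring.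
  - assert (E := tree_fun_pointed x Hx). unfold x in E. rewrite tree_fun_at in E by exact Hlam.
    fold x in E. apply (Rmult_eq_reg_r (1 - lam)); [|lra]. rewrite <- E. field. lra.
Qed.

(** * Distribution and means of W and X *)

Lemma PW_one (lam : R) : PW lam 1 = (lam + 1) * exp (- lam).
Proof. unfold PW, PX, prob_cyl, poisson. simpl. field. Qed.

Lemma PX_one (lam : R) : PX lam 1 = lam * exp (- lam).
Proof. unfold PX, prob_cyl, poisson. simpl. field. Qed.

Lemma PX_closed_form (lam : R) (w : nat) :
  (2 <= w)%nat ->
  PX lam w = INR (w - 1) ^ (w - 2) / (INR w * INR (fact (w - 2))) * lam ^ w * exp (- (INR w * lam)).
Proof.
  intros Hw. destruct w as [|[|k]]; [lia|lia|].
  rewrite PX_succ by lia. replace (S (S k) - 1)%nat with (S k) by lia.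
  replace (S (S k) - 2)%nat with k by lia.
  replace (exp (- (INR (S (S k)) * lam))) with (exp (- lam) * exp (- (INR (S k) * lam)))
    by (rewrite <- exp_plus, (S_INR (S k)); f_equal; ring).
  unfold poisson. rewrite Rpow_mult_distr, !fact_simpl, !mult_INR.
  change (INR (S k) ^ S (S k)) with (INR (S k) * (INR (S k) * INR (S k) ^ k)).
  assert (INR (fact k) <> 0) by apply INR_fact_neq_0.
  assert (INR (S k) <> 0) by (apply not_0_INR; lia).
  assert (INR (S (S k)) <> 0) by (apply not_0_INR; lia).
  field. auto.
Qed.

Lemma mul_PX_eq_pointed_tree (lam : R) (k : nat) :
  INR (S (S k)) * PX lam (S (S k))
  = lam * exp (- lam) * (pointed_tree_coef (S k) * (lam * exp (- lam)) ^ S k).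
Proof.
  rewrite PX_succ by lia. rewrite pointed_tree_coef_succ.
  unfold poisson. rewrite !Rpow_mult_distr, exp_pow.
  replace (INR (S k) * - lam) with (- (INR (S k) * lam)) by ring.
  rewrite (fact_simpl (S k)), mult_INR.
  assert (INR (fact (S k)) <> 0) by apply INR_fact_neq_0.
  assert (INR (S k) <> 0) by (apply not_0_INR; lia).
  assert (INR (S (S k)) <> 0) by (apply not_0_INR; lia).
  rewrite <- !tech_pow_Rmult. field. auto.
Qed.

Lemma is_series_pointed_tree_tail (lam : R) (f : nat -> R) :
  0 < lam < 1 -> f 0%nat = 0 ->
  (forall k, f (S (S k))
             = lam * exp (- lam) * (pointed_tree_coef (S k) * (lam * exp (- lam)) ^ S k)) ->
  is_series f (f 1%nat + lam * exp (- lam) * (lam / (1 - lam))).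
Proof.
  intros Hlam Hf0 Hf. set (x := lam * exp (- lam)).
  assert (Htail : is_series (fun k => f (S (S k))) (x * (lam / (1 - lam)))).
  { apply (is_series_ext (fun k => scal x (pointed_tree_coef (S k) * x ^ S k)));
      [intros k; rewrite Hf; reflexivity|].
    apply (@is_series_scal R_AbsRing R_NormedModule).
    apply (is_series_incr_1 (fun k => pointed_tree_coef k * x ^ k)).
    match goal with |- is_series _ ?l => replace l with (lam / (1 - lam)) end.
    - apply is_series_pointed_tree, Hlam.
    - unfold pointed_tree_coef, plus. simpl. ring. }
  apply is_series_decr_1, is_series_decr_1. cbv beta.
  match goal with |- is_series _ ?l => replace l with (x * (lam / (1 - lam))) end.
  - exact Htail.
  - rewrite Hf0. unfold plus, opp. simpl. ring.
Qed.

Lemma is_series_mean_W (lam : R) :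
  0 < lam < 1 -> is_series (fun w => INR w * PW lam w) (exp (- lam) / (1 - lam)).
Proof.
  intros Hlam.
  replace (exp (- lam) / (1 - lam))
    with (INR 1 * PW lam 1 + lam * exp (- lam) * (lam / (1 - lam)))
    by (rewrite PW_one; simpl; field; lra).
  apply (is_series_pointed_tree_tail lam (fun w => INR w * PW lam w) Hlam).
  - simpl. ring.
  - intros k. apply mul_PX_eq_pointed_tree.
Qed.

Lemma is_series_mean_X (lam : R) :
  0 < lam < 1 -> is_series (fun z => INR z * PX lam z) (lam * (exp (- lam) / (1 - lam))).
Proof.
  intros Hlam.
  replace (lam * (exp (- lam) / (1 - lam)))
    with (INR 1 * PX lam 1 + lam * exp (- lam) * (lam / (1 - lam)))
    by (rewrite PX_one; simpl; field; lra).
  apply (is_series_pointed_tree_tail lam (fun z => INR z * PX lam z) Hlam).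
  - simpl. ring.
  - intros k. apply mul_PX_eq_pointed_tree.
Qed.

Theorem corollary2 (lam : R) (Hl0 : 0 <= lam) (Hl1 : lam < 1) :
  PW lam 1 = (lam + 1) * exp (- lam) /\
  (forall w : nat, (2 <= w)%nat ->
     PW lam w = INR (w - 1) ^ (w - 2) / (INR w * INR (fact (w - 2)))
                * lam ^ w * exp (- (INR w * lam))) /\
  (0 < lam ->
     infinite_sum (fun w => INR w * PW lam w) (exp (- lam) / (1 - lam)) /\
     infinite_sum (fun z => INR z * PX lam z) (lam * (exp (- lam) / (1 - lam)))).
Proof.
  split; [|split].
  - apply PW_one.
  - intros w Hw. destruct w as [|[|w]]; [lia|lia|]. apply PX_closed_form. lia.
  - intros Hpos. split; apply is_series_Reals.
    + apply is_series_mean_W. lra.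
    + apply is_series_mean_X. lra.
Qed.
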